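(* Let $\mathcal{T}$ be an MPQ-tree of an interval graph $G=(V,E)$, and let $x\ne y$ with $node(x)=node(y)=Q$ a Q-node with sections $S_1,\dots,S_k$. Suppose $x$ and $y$ have exactly one common section $S_i$ in $Q$, and the set $V_i$ of vertices of the subtree $T_i$ induces a clique in $G$ (possibly $V_i=\emptyset$). Then $(x,y)$ is an interval edge.
   Context: Graphs are finite and simple; for $G=(V,E)$ and $e\in E$, $G-e=(V,E\setminus\{e\})$. An edge $(x,y)\in E$ of an interval graph $G$ is an interval edge if $G-(x,y)$ is an interval graph. An MPQ-tree of an interval graph $G=(V,E)$, $V=\{1,\dots,n\}$, is a rooted plane tree whose nodes are P-nodes and Q-nodes. Each P-node carries a (possibly empty) set of vertices. A Q-node has $k\ge 3$ ordered positions $1,\dots,k$; position $i$ carries a set $S_i\subseteq V$ (the $i$-th section) and a child subtree $T_i$, which may be empty. Every vertex $v$ is assigned to exactly one node $node(v)$: either $v$ lies in the set of the P-node $node(v)$, or $node(v)$ is a Q-node and $v$ lies exactly in the sections $S_{l(v)},\dots,S_{r(v)}$ of it, with $l(v)<r(v)$. For a node with child subtrees $T_1,\dots,T_k$, $V_i$ denotes the set of vertices assigned to nodes of $T_i$ ($V_i=\emptyset$ if $T_i$ is empty). The maximal cliques of $G$ are in bijection with the descending paths from the root which at a P-node continue into one of its children (stopping if there is none) and at a Q-node choose a position $i$ and continue into $T_i$ (stopping if $T_i$ is empty); the clique is the union of the sets of the visited P-nodes and the chosen sections. Reading these cliques left to right gives a linear order of the maximal cliques, and the orders obtained this way after arbitrarily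 permuting children of P-nodes and reversing the positions of Q-nodes are exactly the orders of the maximal cliques of $G$ in which the cliques containing any fixed vertex are consecutive. Moreover, for every Q-node with sections $S_1,\dots,S_k$: (a) $V_1\neq\emptyset$ and $V_k\ne\emptyset$; (b) $S_1\subseteq S_2$ and $S_k\subseteq S_{k-1}$; (c) $S_{i-1}\cap S_i\neq\emptyset$ for $2\le i\le k$; (d) $S_{i-1}\neq S_i$ for $2\le i\le k$; (e) $(S_i\cap S_{i+1})\setminus S_1\neq\emptyset$ and $(S_{i-1}\cap S_i)\setminus S_k\neq\emptyset$ for $2\le i\le k-1$; (f) $(S_{i-1}\cup V_{i-1})\setminus S_i\neq\emptyset$ and $(S_i\cup V_i)\setminus S_{i-1}\neq\emptyset$ for $2\le i\le k$; and further (g) no empty P-node has an empty P-node as its parent, (h) no P-node has exactly one child whose root is a P-node, (i) every child subtree of a P-node is nonempty. *)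

From mathcomp Require Import all_boot.
Set Implicit Arguments. Unset Strict Implicit. Unset Printing Implicit Defensive.

Section Graphs.
Variable T : finType.

(* A simple graph on the finite vertex type T is a symmetric irreflexive
   relation g : rel T (hypotheses stated in the theorem). *)

Definition remove_edge (g : rel T) (x y : T) : rel T :=
  fun u v => g u v && ~~ (((u == x) && (v == y)) || ((u == y) && (v == x))).

(* Interval graph: intersection graph of closed intervals [l v, r v]
   (integer endpoints suffice for finite graphs). *)
Definition is_interval_graph (g : rel T) : Prop :=
  exists (l r : T -> nat), (forall v, l v <= r v) /\
    (forall u v, u != v -> g u v = (l u <= r v) && (l v <= r u)).

Definition interval_edge (g : rel T) (x y : T) : Prop :=
  g x y /\ is_interval_graph (remove_edge g x y).

Definition is_clique (g : rel T) (C : {set T}) : Prop :=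
  forall u v, u \in C -> v \in C -> u != v -> g u v.

Definition is_max_clique (g : rel T) (C : {set T}) : Prop :=
  is_clique g C /\ forall C', is_clique g C' -> C \subset C' -> C' = C.

End Graphs.

(* A P-node carries a set of
   vertices and an ordered list of children; a Q-node carries its sections
   S_1..S_k together with the (possibly empty = None) child subtrees T_i. *)
Inductive mtree (T : finType) : Type :=
| PNode : {set T} -> seq (mtree T) -> mtree T
| QNode : seq ({set T} * option (mtree T)) -> mtree T.

Arguments PNode {T}.
Arguments QNode {T}.

Section Trees.
Variable T : finType.

Fixpoint vset (t : mtree T) : {set T} :=
  match t with
  | PNode X ch => X :|: foldr (fun c acc => vset c :|: acc) set0 ch
  | QNode secs => foldr (fun st acc =>
        st.1 :|: (match st.2 with None => set0 | Some c => vset c end) :|: acc)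
        set0 secs
  end.

Definition vset_opt (o : option (mtree T)) : {set T} :=
  match o with None => set0 | Some c => vset c end.

Fixpoint nodes (t : mtree T) : seq (mtree T) :=
  match t with
  | PNode X ch => t :: flatten (map nodes ch)
  | QNode secs => t :: flatten (map (fun st =>
        match st.2 with None => [::] | Some c => nodes c end) secs)
  end.

Definition is_node (t N : mtree T) : Prop :=
  exists2 i, i < size (nodes t) & nth (PNode set0 [::]) (nodes t) i = N.

(* the cliques associated with the descending paths, left to right *)
Fixpoint cliques (t : mtree T) : seq {set T} :=
  match t with
  | PNode X ch =>
      if ch is [::] then [:: X]
      else flatten (map (fun c => [seq X :|: C | C <- cliques c]) ch)
  | QNode secs =>
      flatten (map (fun st =>
        match st.2 with
        | None => [:: st.1]
        | Some c => [seq st.1 :|: C | C <- cliques c]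
        end) secs)
  end.

Definition prod_lists (A : Type) (ls : seq (seq A)) : seq (seq A) :=
  foldr (fun l acc => [seq x :: r | x <- l, r <- acc]) [:: [::]] ls.

(* all trees obtained by permuting children of P-nodes and reversing
   Q-nodes (recursively) *)
Fixpoint variants (t : mtree T) : seq (mtree T) :=
  match t with
  | PNode X ch =>
      [seq PNode X (map (nth (PNode set0 [::]) c) p)
         | c <- prod_lists (map variants ch),
           p <- permutations (iota 0 (size ch))]
  | QNode secs =>
      flatten [seq [:: QNode cs; QNode (rev cs)]
         | cs <- prod_lists (map (fun st =>
                   match st.2 with
                   | None => [:: (st.1, None)]
                   | Some c => [seq (st.1, Some c') | c' <- variants c]
                   end) secs)]
  end.

Definition consecutive (s : seq {set T}) : Prop :=
  forall v i j k, i <= j -> j <= k -> k < size s ->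
    v \in nth set0 s i -> v \in nth set0 s k -> v \in nth set0 s j.

Definition occurs (v : T) (N : mtree T) : bool :=
  match N with
  | PNode X _ => v \in X
  | QNode secs => has (fun st : {set T} * option (mtree T) => v \in st.1) secs
  end.

Definition sec (secs : seq ({set T} * option (mtree T))) (i : nat) : {set T} :=
  nth set0 (map fst secs) i.

Definition subV (secs : seq ({set T} * option (mtree T))) (i : nat) : {set T} :=
  vset_opt (nth None (map snd secs) i).

Definition is_emptyP (N : mtree T) : bool :=
  if N is PNode X _ then X == set0 else false.

Definition is_P (N : mtree T) : bool :=
  if N is PNode _ _ then true else false.

(* local conditions on a node; indices are 0-based: sections 0..k-1 *)
Definition node_ok (N : mtree T) : Prop :=
  match N with
  | PNode X ch =>
      (X == set0 -> forall c, c \in map is_emptyP ch -> c = false)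
      /\ ~ (exists c, ch = [:: c] /\ is_P c)
      /\ (forall c, c \in map vset ch -> c != set0)
  | QNode secs =>
      let k := size secs in
      3 <= k
      /\ subV secs 0 != set0 /\ subV secs k.-1 != set0
      /\ sec secs 0 \subset sec secs 1
                 /\ sec secs k.-1 \subset sec secs k.-2
      /\ (forall i, 1 <= i < k -> sec secs i.-1 :&: sec secs i != set0)
      /\ (forall i, 1 <= i < k -> sec secs i.-1 != sec secs i)
      /\ (forall i, 1 <= i <= k - 2 ->
             (sec secs i :&: sec secs i.+1) :\: sec secs 0 != set0
             /\ (sec secs i.-1 :&: sec secs i) :\: sec secs k.-1 != set0)
      /\ (forall i, 1 <= i < k ->
             (sec secs i.-1 :|: subV secs i.-1) :\: sec secs i != set0
             /\ (sec secs i :|: subV secs i) :\: sec secs i.-1 != set0)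
  end.

Definition is_MPQ_tree (g : rel T) (t : mtree T) : Prop :=
  (forall v, count (occurs v) (nodes t) = 1)
  /\ (forall v secs, is_node t (QNode secs) -> occurs v (QNode secs) ->
        exists l r, l < r < size secs /\
          forall i, i < size secs -> (v \in sec secs i) = (l <= i <= r))
  (* bijection between descending paths and maximal cliques *)
  /\ uniq (cliques t)
  /\ (forall C, C \in cliques t <-> is_max_clique g C)
  /\ (forall s, s \in map cliques (variants t) <->
                (perm_eq s (cliques t) /\ consecutive s))
  /\ (forall N, is_node t N -> node_ok N).

End Trees.

(* The
   proof reads off an interval model of G - xy from the order of maximal
   cliques given by the MPQ-tree:

   1. Every maximal clique containing a vertex of Q has the shape
      A :|: S_j :|: C, where A is the union of the sets on the path from the
      root to Q (it avoids the vertices of Q) and C is a subset of V_j; and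
      every section S_j is reached by such a clique.
   2. Hence exactly one maximal clique contains both x and y (two of them
      are A :|: S_i :|: C1 and A :|: S_i :|: C2, whose union is a clique as
      V_i is), and since x and y both span two sections, some maximal
      clique contains x but not y and vice versa.
   3. In any order of the maximal cliques in which the cliques through a
      vertex are consecutive, the ranges of cliques through the vertices
      form an interval model of G.  Under 2 the ranges of x and y touch in a
      single point; shifting all endpoints into even/odd positions separates
      exactly these two intervals, which gives an interval model of G - xy.
      The left-to-right clique order of the tree is such an order, being
      the order of one of its variants. *)

From mathcomp Require Import all_boot zify.
From Stdlib Require List.
Set Implicit Arguments. Unset Strict Implicit. Unset Printing Implicit Defensive.

(* Membership in sequences over types without decidable equality (such as
   MPQ-trees) is expressed with List.In. *)
Section ListMembership.
Variables A B : Type.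

Lemma In_map (f : A -> B) a l : List.In a l -> List.In (f a) (map f l).
Proof. by elim: l => //= b l IH [->|/IH]; [left|right]. Qed.

Lemma In_cat (z : B) l1 l2 :
  List.In z (l1 ++ l2) <-> List.In z l1 \/ List.In z l2.
Proof. by elim: l1 => /= [|a l1 IH]; [tauto | rewrite IH; tauto]. Qed.

Lemma In_flatten_map (F : A -> seq B) z l :
  List.In z (flatten (map F l)) <-> exists2 a, List.In a l & List.In z (F a).
Proof.
elim: l => /= [|a l IH]; first by split=> // -[].
rewrite In_cat IH; split.
- by case=> [Hz|[b Hb Hz]]; [exists a; first left | exists b; first right].
- by case=> b [<-|Hb] Hz; [left | right; exists b].
Qed.

Lemma In_nth (d : A) a l : List.In a l -> exists2 i, i < size l & nth d l i = a.
Proof. by elim: l => //= b l IH [->|/IH [i Hi <-]]; [exists 0 | exists i.+1]. Qed.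

Lemma nth_In (d : A) l i : i < size l -> List.In (nth d l i) l.
Proof. by elim: l i => //= a l IH [|i] Hi; [left | right; apply: IH]. Qed.

Lemma count_In (p : pred A) a l : List.In a l -> p a -> 0 < count p l.
Proof. by elim: l => //= b l IH [->|/IH H] pa; [rewrite pa | have := H pa; lia]. Qed.

Lemma count_flatten_ge (p : pred B) (F : A -> seq B) a l :
  List.In a l -> count p (F a) <= count p (flatten (map F l)).
Proof. by elim: l => //= b l IH [<-|/IH]; rewrite count_cat; lia. Qed.

Lemma count_once_member (p : pred B) (F : A -> seq B) b a l :
  List.In a l -> count p (b :: flatten (map F l)) = 1 -> 0 < count p (F a) ->
  [/\ count p (F a) = 1, ~~ p b & count p (flatten (map F l)) <= 1].
Proof.
move=> Ha; have := count_flatten_ge p F Ha; rewrite /=.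
by case: (p b) => /= ? ? ?; [lia | split=> //; lia].
Qed.

Lemma count_flatten_uniq (p : pred B) (F : A -> seq B) a b l :
  List.In a l -> List.In b l -> 0 < count p (F a) -> 0 < count p (F b) ->
  count p (flatten (map F l)) <= 1 -> a = b.
Proof.
elim: l => //= c l IH [<-|Ha] [<-|Hb] pa pb; rewrite count_cat => H //.
- by have := count_flatten_ge p F Hb; lia.
- by have := count_flatten_ge p F Ha; lia.
- by apply: IH => //; lia.
Qed.
End ListMembership.

Lemma InP (A : eqType) (a : A) s : reflect (List.In a s) (a \in s).
Proof.
elim: s => [|b s IH] /=; first by constructor.
rewrite inE; apply: (iffP orP) => [[/eqP->|/IH]|[->|/IH]]; auto.
Qed.

Lemma mem_flatten_map (A : Type) (B : eqType) (F : A -> seq B) z l :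
  z \in flatten (map F l) <-> exists2 a, List.In a l & z \in F a.
Proof.
split=> [/InP/In_flatten_map [a Ha /InP Hz]|[a Ha /InP Hz]]; first by exists a.
by apply/InP/In_flatten_map; exists a.
Qed.


Section TreeFacts.
Variable T : finType.
Implicit Types (t c : mtree T) (v : T) (secs : seq ({set T} * option (mtree T))).

Lemma mtree_ind' (P : mtree T -> Prop) :
  (forall X ch, (forall c, List.In c ch -> P c) -> P (PNode X ch)) ->
  (forall secs, (forall S c, List.In (S, Some c) secs -> P c) -> P (QNode secs)) ->
  forall t, P t.
Proof.
move=> HP HQ; fix IH 1 => -[X ch|secs].
- apply: HP; move: ch; fix IHl 1 => -[|c0 ch] c /=; first by case.
  by case=> [<-|Hc]; [exact: IH | exact: IHl ch c Hc].
- apply: HQ; move: secs; fix IHl 1 => -[|[S0 [c0|]] secs] S c /=; first by case.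
  + by case=> [[_ <-]|Hc]; [exact: IH | exact: IHl secs S c Hc].
  + by case=> [E|Hc]; [discriminate E | exact: IHl secs S c Hc].
Qed.

Definition child_nodes (st : {set T} * option (mtree T)) : seq (mtree T) :=
  if st.2 is Some c then nodes c else [::].

Definition section_cliques (st : {set T} * option (mtree T)) : seq {set T} :=
  if st.2 is Some c then [seq st.1 :|: C | C <- cliques c] else [:: st.1].

Lemma nodesQ secs : nodes (QNode secs) = QNode secs :: flatten (map child_nodes secs).
Proof. by []. Qed.

Lemma cliquesQ secs : cliques (QNode secs) = flatten (map section_cliques secs).
Proof. by []. Qed.

Lemma cliquesP X ch : ch <> [::] ->
  cliques (PNode X ch) = flatten (map (fun c => [seq X :|: C | C <- cliques c]) ch).
Proof. by case: ch. Qed.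

Lemma secE secs j : sec secs j = (nth (set0, None) secs j).1.
Proof. by rewrite /sec; elim: secs j => [|st secs IH] [|j] //=. Qed.

Lemma subVE secs j : subV secs j = vset_opt (nth (set0, None) secs j).2.
Proof. by rewrite /subV; elim: secs j => [|st secs IH] [|j] //=. Qed.

Lemma in_vsetP v X ch :
  v \in vset (PNode X ch) <-> v \in X \/ exists2 c, List.In c ch & v \in vset c.
Proof.
rewrite /= in_setU; split.
- case/orP=> [->|Hv]; [by left | right].
  elim: ch Hv => /= [|c ch IH]; first by rewrite in_set0.
  by rewrite in_setU => /orP [Hv|/IH [c' Hc' Hv]]; [exists c; first left | exists c'; first right].
- case=> [->//|[c Hc Hv]]; apply/orP; right.
  elim: ch Hc => //= c' ch IH [Ec|Hc]; rewrite in_setU; first by rewrite Ec Hv.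
  by rewrite IH ?orbT.
Qed.

Lemma in_vsetQ v secs :
  v \in vset (QNode secs) <->
  exists2 st, List.In st secs & (v \in st.1) || (v \in vset_opt st.2).
Proof.
rewrite /=; split.
- elim: secs => /= [|st secs IH]; first by rewrite in_set0.
  rewrite !in_setU -orbA => /orP [Hv|/orP [Hv|/IH [st' Hst' Hv]]].
  + by exists st; [left | rewrite Hv].
  + by exists st; [left | apply/orP; right].
  + by exists st'; first right.
- case=> st Hst Hv; elim: secs Hst => //= st' secs IH [Est|Hst]; rewrite !in_setU.
  + by subst st'; case/orP: Hv => ->; rewrite ?orbT.
  + by rewrite IH ?orbT.
Qed.

Lemma cliques_sub t C : C \in cliques t -> C \subset vset t.
Proof.
elim/mtree_ind': t C => [X ch IH|secs IH] C.
- case: ch IH => [|c0 ch] IH.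
  + by rewrite /= inE => /eqP ->; rewrite subsetUl.
  + rewrite cliquesP // => /mem_flatten_map [c Hc /mapP [C' HC' ->]].
    apply/subsetP=> v; rewrite in_setU => /orP [Hv|Hv]; apply/in_vsetP; first by left.
    by right; exists c => //; apply: (subsetP (IH c Hc C' HC')).
- rewrite cliquesQ => /mem_flatten_map [[S o] Hst HC]; apply/subsetP=> v Hv.
  apply/in_vsetQ; exists (S, o) => //=; move: HC; rewrite /section_cliques /=.
  case: o Hst => [c|] Hst.
  + case/mapP=> C' HC' EC; move: Hv; rewrite EC in_setU => /orP [->//|Hv].
    by rewrite (subsetP (IH S c Hst C' HC')) ?orbT.
  + by rewrite inE => /eqP EC; rewrite -EC Hv.
Qed.

Lemma occursQ v secs st : List.In st secs -> v \in st.1 -> occurs v (QNode secs).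
Proof.
move=> Hst Hv; rewrite /= has_count.
exact: (count_In (p := fun st : {set T} * option (mtree T) => v \in st.1) Hst Hv).
Qed.

Lemma vset_occurs t v : v \in vset t -> 0 < count (occurs v) (nodes t).
Proof.
elim/mtree_ind': t => [X ch IH|secs IH].
- case/in_vsetP=> [Hv|[c Hc Hv]] /=; first by rewrite Hv.
  have := count_flatten_ge (occurs v) (@nodes T) Hc; have := IH c Hc Hv; lia.
- case/in_vsetQ=> [[S o] Hst /orP [Hv|Hv]] /=.
  + by have := occursQ Hst Hv; rewrite /= => ->.
  + case: o Hv Hst => [c|] /= Hv Hst; last by rewrite in_set0 in Hv.
    have := count_flatten_ge (occurs v) child_nodes Hst; have := IH S c Hst Hv.
    rewrite /child_nodes /=; lia.
Qed.

Definition has_sections (N : mtree T) : bool :=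
  if N is QNode secs then 0 < size secs else true.

Lemma cliques_nonempty t :
  (forall M, List.In M (nodes t) -> has_sections M) -> exists C, C \in cliques t.
Proof.
elim/mtree_ind': t => [X [|c0 ch] IH|secs IH] Hsec /=.
- by exists X; rewrite inE.
- have [C HC] : exists C, C \in cliques c0.
    apply: IH; first by left.
    by move=> M HM; apply: Hsec; right; apply/In_flatten_map; exists c0; first left.
  by exists (X :|: C); rewrite mem_cat map_f.
- have := Hsec (QNode secs) (or_introl erefl).
  case: secs IH Hsec => [//|[S [c|]] secs] IH Hsec _ /=; last by exists S; rewrite mem_head.
  have [C HC] : exists C, C \in cliques c.
    apply: (IH S c (or_introl erefl)) => M HM.
    by apply: Hsec; right; apply/In_cat; left.
  by exists (S :|: C); rewrite mem_cat map_f.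
Qed.

Lemma In_prod_lists (A : Type) (ls : seq (seq A)) (r : seq A) :
  size r = size ls ->
  (forall k d, k < size r -> List.In (nth d r k) (nth [::] ls k)) ->
  List.In r (prod_lists ls).
Proof.
elim: ls r => [|l ls IH] [|a r] //=; first by left.
move=> [Hs] Hr.
apply/In_flatten_map; exists a; first exact: (Hr 0 a).
by apply: In_map; apply: IH => // k d; apply: (Hr k.+1).
Qed.

Lemma In_variants t : List.In t (variants t).
Proof.
elim/mtree_ind': t => [X ch IH|secs IH] /=.
- apply/In_flatten_map; exists ch.
  + apply: In_prod_lists; first by rewrite size_map.
    move=> k d Hk; rewrite (nth_map (PNode set0 [::])) // (set_nth_default (PNode set0 [::]) d Hk).
    by apply: IH; apply: nth_In.
  + have {1}-> : ch = map (nth (PNode set0 [::]) ch) (iota 0 (size ch)).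
      by rewrite -[LHS](mkseq_nth (PNode set0 [::])).
    apply: (In_map (fun p => PNode X (map (nth (PNode set0 [::]) ch) p))).
    by apply/InP; rewrite mem_permutations.
- apply/In_flatten_map; exists secs; last by left.
  apply: In_prod_lists; first by rewrite size_map.
  move=> k d Hk; rewrite (nth_map (set0, None)) // (set_nth_default (set0, None) d Hk).
  have := nth_In (set0, None) Hk.
  case: (nth (set0, None) secs k) => [S [c|]] Hst /=; last by left.
  by apply: (In_map (fun c' => (S, Some c'))); apply: (IH S c Hst).
Qed.

Lemma cliques_consecutive g t : is_MPQ_tree g t -> consecutive (cliques t).
Proof.
case=> _ [_ [_ [_ [Hvar _]]]].
have /Hvar [] // : cliques t \in map (@cliques T) (variants t).
by apply/InP; apply: In_map; apply: In_variants.
Qed.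
End TreeFacts.


Section CliquesThroughQ.
Variables (T : finType) (secs : seq ({set T} * option (mtree T))) (W : {set T}).
Hypothesis W_at_Q : forall v, v \in W -> occurs v (QNode secs).

Definition avoids_W (A : {set T}) : Prop := forall v, v \in W -> v \notin A.

Definition cliques_through (t : mtree T) (A : {set T}) : Prop :=
  avoids_W A /\
  (forall K, K \in cliques t -> (exists2 v, v \in W & v \in K) ->
     exists j (C : {set T}), [/\ j < size secs, avoids_W C,
       C \subset subV secs j & K = A :|: sec secs j :|: C]) /\
  (forall j, j < size secs -> exists2 C : {set T}, avoids_W C &
       (C \subset subV secs j) && (A :|: sec secs j :|: C \in cliques t)).

Lemma child_avoids_W S c : List.In (S, Some c) secs ->
  (forall v, v \in W -> count (occurs v) (nodes (QNode secs)) = 1) -> avoids_W (vset c).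
Proof.
move=> Hst Hcount v Hv; apply/negP => /vset_occurs Hc.
have [_ /negP Hout _] := count_once_member (F := @child_nodes T) Hst (Hcount v Hv) Hc.
exact: Hout (W_at_Q Hv).
Qed.

Lemma cliques_through_base :
  (forall v, v \in W -> count (occurs v) (nodes (QNode secs)) = 1) ->
  (forall M, List.In M (nodes (QNode secs)) -> has_sections M) ->
  cliques_through (QNode secs) set0.
Proof.
move=> Hcount Hsec.
have avoids0 : avoids_W set0 by move=> v _; rewrite in_set0.
have avoids_sub S c C : List.In (S, Some c) secs -> C \in cliques c -> avoids_W C.
  move=> Hst HC v Hv; apply: contra (child_avoids_W Hst Hcount Hv).
  exact/subsetP/cliques_sub.
split; [done | split].
- move=> K; rewrite cliquesQ => /mem_flatten_map [[S o] Hst HK] _.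
  have [j Hj Ej] := In_nth (set0, None) Hst.
  exists j; move: HK; rewrite /section_cliques secE subVE Ej /=.
  case: o Hst {Ej} => [c|] Hst HK.
  + case/mapP: HK => C HC ->; exists C.
    by split=> //; [exact: avoids_sub Hst HC | exact: cliques_sub HC | rewrite set0U].
  + by exists set0; move: HK; rewrite inE => /eqP ->; rewrite sub0set set0U setU0.
- move=> j Hj; rewrite secE subVE set0U cliquesQ.
  have Hst := nth_In (set0, None) Hj.
  case: (nth (set0, None) secs j) Hst => S [c|] Hst /=.
  + have [C HC] : exists C, C \in cliques c.
      apply: cliques_nonempty => M HM; apply: Hsec; rewrite nodesQ; right.
      by apply/In_flatten_map; exists (S, Some c).
    exists C; first exact: avoids_sub Hst HC.
    rewrite cliques_sub //=; apply/mem_flatten_map; exists (S, Some c) => //.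
    exact: map_f.
  + exists set0 => //; rewrite sub0set setU0 /=.
    by apply/mem_flatten_map; exists (S, None); rewrite //= mem_head.
Qed.

Lemma cliques_through_lift t c (Y A : {set T}) :
  cliques_through c A -> avoids_W Y ->
  (forall K, K \in cliques t -> (exists2 v, v \in W & v \in K) ->
     exists2 K', K' \in cliques c & K = Y :|: K') ->
  (forall K', K' \in cliques c -> Y :|: K' \in cliques t) ->
  cliques_through t (Y :|: A).
Proof.
move=> [HA [Hshape Hreach]] HY Hdown Hup; split.
  by move=> v Hv; rewrite in_setU negb_or HY ?HA.
split.
- move=> K HK [v Hv HvK]; have [K' HK' EK] := Hdown K HK (ex_intro2 _ _ v Hv HvK).
  have HvK' : v \in K' by move: HvK; rewrite EK in_setU (negbTE (HY v Hv)).
  have [j [C [Hj HC HCj EK']]] := Hshape K' HK' (ex_intro2 _ _ v Hv HvK').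
  by exists j, C; split=> //; rewrite EK EK' !setUA.
- move=> j Hj; have [C HC /andP [HCj HK]] := Hreach j Hj.
  by exists C => //; rewrite HCj -!setUA Hup // setUA.
Qed.

Lemma cliques_through_P X ch c A : List.In c ch ->
  (forall v, v \in W -> count (occurs v) (nodes (PNode X ch)) = 1) ->
  (forall v, v \in W -> 0 < count (occurs v) (nodes c)) ->
  cliques_through c A -> cliques_through (PNode X ch) (X :|: A).
Proof.
move=> Hc Hcount Hpos HA.
have HW v : v \in W -> v \notin X /\ count (occurs v) (flatten (map (@nodes T) ch)) <= 1.
  by move=> Hv; have [_ Hout Hle] := count_once_member (F := @nodes T) Hc (Hcount v Hv) (Hpos v Hv).
have Ecl := @cliquesP T X ch (fun E => ltac:(by rewrite E in Hc)).
apply: cliques_through_lift HA _ _ _ => [v /HW [] //|K|K' HK'].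
- rewrite Ecl => /mem_flatten_map [c' Hc' /mapP [C' HC' ->]] [v Hv].
  have [HvX Hle] := HW v Hv; rewrite in_setU (negbTE HvX) /= => HvC'.
  have Ec : c' = c.
    apply: (count_flatten_uniq Hc' Hc _ (Hpos v Hv) Hle).
    by apply: vset_occurs; apply: (subsetP (cliques_sub HC')).
  by exists C'; rewrite -?Ec.
- by rewrite Ecl; apply/mem_flatten_map; exists c => //; apply: map_f.
Qed.

Lemma cliques_through_Q secs' S c A : List.In (S, Some c) secs' ->
  (forall v, v \in W -> count (occurs v) (nodes (QNode secs')) = 1) ->
  (forall v, v \in W -> 0 < count (occurs v) (nodes c)) ->
  cliques_through c A -> cliques_through (QNode secs') (S :|: A).
Proof.
move=> Hst Hcount Hpos HA.
have HW v : v \in W -> (forall st, List.In st secs' -> v \notin st.1) /\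
    count (occurs v) (flatten (map (@child_nodes T) secs')) <= 1.
  move=> Hv; have [_ Hout Hle] :=
    count_once_member (F := @child_nodes T) Hst (Hcount v Hv) (Hpos v Hv).
  by split=> // st Hst'; apply: contra Hout; apply: occursQ Hst'.
apply: cliques_through_lift HA _ _ _ => [v /HW [Hout _]|K|K' HK'].
- exact: (Hout _ Hst).
- rewrite cliquesQ => /mem_flatten_map [[S' o] Hst' HK] [v Hv HvK].
  have [Hout Hle] := HW v Hv; have HvS' := Hout _ Hst'; rewrite /= in HvS'.
  case: o Hst' HK HvK => [c'|] Hst' HK HvK; last first.
    by move: HK HvK; rewrite /section_cliques inE => /eqP ->; rewrite (negbTE HvS').
  case/mapP: HK HvK => C' HC' -> /=; rewrite in_setU (negbTE HvS') /= => HvC'.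
  have [ES Ec] : (S', Some c') = (S, Some c).
    apply: (count_flatten_uniq Hst' Hst _ (Hpos v Hv) Hle).
    by apply: vset_occurs; apply: (subsetP (cliques_sub HC')).
  by subst S' c'; exists C'.
- by rewrite cliquesQ; apply/mem_flatten_map; exists (S, Some c) => //; apply: map_f.
Qed.

Lemma cliques_through_exists t :
  List.In (QNode secs) (nodes t) ->
  (forall v, v \in W -> count (occurs v) (nodes t) = 1) ->
  (forall M, List.In M (nodes t) -> has_sections M) ->
  exists A, cliques_through t A.
Proof.
elim/mtree_ind': t => [X ch IH|secs' IH] [EQ|HN] Hcount Hsec //.
- move/In_flatten_map: HN => [c Hc HNc].
  have Hpos v : v \in W -> 0 < count (occurs v) (nodes c).
    by move=> Hv; apply: count_In HNc (W_at_Q Hv).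
  have [A HA] : exists A, cliques_through c A.
    apply: IH => // [v Hv|M HM].
      by have [] := count_once_member (F := @nodes T) Hc (Hcount v Hv) (Hpos v Hv).
    by apply: Hsec; right; apply/In_flatten_map; exists c.
  by exists (X :|: A); apply: cliques_through_P Hc Hcount Hpos HA.
- by case: EQ => E; subst secs'; exists set0; apply: cliques_through_base.
- move/In_flatten_map: HN => [[S [c|]] Hst //= HNc].
  have Hpos v : v \in W -> 0 < count (occurs v) (nodes c).
    by move=> Hv; apply: count_In HNc (W_at_Q Hv).
  have [A HA] : exists A, cliques_through c A.
    apply: (IH S c Hst) => // [v Hv|M HM].
      by have [] := count_once_member (F := @child_nodes T) Hst (Hcount v Hv) (Hpos v Hv).
    by apply: Hsec; right; apply/In_flatten_map; exists (S, Some c).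
  by exists (S :|: A); apply: cliques_through_Q Hst Hcount Hpos HA.
Qed.

Lemma MPQ_cliques_through g t : is_MPQ_tree g t -> is_node t (QNode secs) ->
  exists A, cliques_through t A.
Proof.
case=> Hcount [_ [_ [_ [_ Hok]]]] [n Hn EN].
apply: cliques_through_exists => [|v _|M HM]; first by rewrite -EN; apply: nth_In.
  exact: Hcount.
have [k Hk Ek] := In_nth (PNode set0 [::]) HM.
have := Hok M (ex_intro2 _ _ k Hk Ek).
by case: M {HM Ek} => //= s [Hs _]; lia.
Qed.
End CliquesThroughQ.


Section CliqueOrders.
Variable T : finType.
Implicit Types (g : rel T) (s : seq {set T}).

(* Boolean form of is_clique, to select a largest clique. *)
Definition cliqueb g (D : {set T}) :=
  [forall u, forall v, (u \in D) ==> (v \in D) ==> (u != v) ==> g u v].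

Lemma cliqueP g D : reflect (is_clique g D) (cliqueb g D).
Proof.
apply: (iffP forallP) => H.
- by move=> u v Hu Hv Huv; have := forallP (H u) v; rewrite Hu Hv Huv.
- by move=> u; apply/forallP => v; do 3!apply/implyP=> ?; apply: H.
Qed.

(* Every clique extends to a maximal clique (a clique of maximum size
   containing it). *)
Lemma max_clique_extends g C : is_clique g C -> exists2 K, is_max_clique g K & C \subset K.
Proof.
move=> /cliqueP HC.
have HP : cliqueb g C && (C \subset C) by rewrite HC subxx.
case: (@arg_maxnP _ C (fun D => cliqueb g D && (C \subset D)) (fun D => #|D|) HP).
move=> K /andP [/cliqueP HK HCK] Hmax; exists K => //; split => // C' /cliqueP HC' HKC'.
have /Hmax Hle : cliqueb g C' && (C \subset C') by rewrite HC' (subset_trans HCK HKC').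
by apply/eqP; rewrite eq_sym eqEcard HKC'; exact: Hle.
Qed.

Lemma max_cliques_cover g s : symmetric g -> (forall C, C \in s <-> is_max_clique g C) ->
  (forall v, has (fun K : {set T} => v \in K) s) /\
  (forall u v, u != v -> g u v -> exists2 K, K \in s & (u \in K) && (v \in K)).
Proof.
move=> g_sym Hmax.
have Hcover (C : {set T}) : is_clique g C -> exists2 K, K \in s & C \subset K.
  by case/max_clique_extends=> K /Hmax HK HCK; exists K.
split=> [v|u v uv Hg].
- have [|K HK /subsetP HvK] := Hcover [set v]; last by apply/hasP; exists K; rewrite ?HvK ?inE.
  by move=> a b; rewrite !inE => /eqP -> /eqP ->; rewrite eqxx.
- have [|K HK /subsetP HuvK] := Hcover [set u; v].
    by move=> a b; rewrite !inE => /orP [] /eqP -> /orP [] /eqP ->; rewrite ?eqxx // g_sym.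
  by exists K; rewrite ?HuvK ?inE ?eqxx ?orbT.
Qed.

Lemma clique_union g (K1 K2 D : {set T}) :
  is_clique g K1 -> is_clique g K2 -> is_clique g D ->
  K1 :\: K2 \subset D -> K2 :\: K1 \subset D -> is_clique g (K1 :|: K2).
Proof.
move=> c1 c2 cD /subsetP s12 /subsetP s21 u v.
have inD w Ka Kb : {subset Ka :\: Kb <= D} -> w \in Ka -> w \notin Kb -> w \in D.
  by move=> sab Ha Hb; apply: sab; rewrite inE Ha Hb.
rewrite !in_setU => /orP [Hu|Hu] /orP [Hv|Hv]; try by [apply: c1 | apply: c2].
- case Hv1: (v \in K1); first exact: c1.
  case Hu2: (u \in K2); first exact: c2.
  by apply: cD; [apply: (inD u K1 K2) | apply: (inD v K2 K1)]; rewrite ?Hu2 ?Hv1.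
- case Hu1: (u \in K1); first exact: c1.
  case Hv2: (v \in K2); first exact: c2.
  by apply: cD; [apply: (inD u K2 K1) | apply: (inD v K1 K2)]; rewrite ?Hu1 ?Hv2.
Qed.

Section Ranges.
Variable s : seq {set T}.
Hypothesis s_consecutive : consecutive s.

Definition first_pos v := find (fun K : {set T} => v \in K) s.
Definition last_pos v := size s - (find (fun K : {set T} => v \in K) (rev s)).+1.

Lemma last_pos_lt v : has (fun K : {set T} => v \in K) s -> last_pos v < size s.
Proof.
rewrite -has_rev has_find size_rev /last_pos; lia.
Qed.

Lemma in_nth_range v j : has (fun K : {set T} => v \in K) s -> j < size s ->
  (v \in nth set0 s j) = (first_pos v <= j <= last_pos v).
Proof.
move=> Hh Hj.
have Hfirst : v \in nth set0 s (first_pos v) by apply: (nth_find set0 Hh).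
have Hhr : has (fun K : {set T} => v \in K) (rev s) by rewrite has_rev.
have Hf : find (fun K : {set T} => v \in K) (rev s) < size s by rewrite -size_rev -has_find.
have Hlast : v \in nth set0 s (last_pos v) by have := nth_find set0 Hhr; rewrite nth_rev.
apply/idP/idP => [Hv|/andP [H1 H2]]; last exact: s_consecutive H1 H2 (last_pos_lt Hh) Hfirst Hlast.
apply/andP; split; rewrite leqNgt; apply/negP => H.
- by have := before_find set0 H; rewrite Hv.
- have H' : size s - j.+1 < find (fun K : {set T} => v \in K) (rev s).
    by move: H; rewrite /last_pos; lia.
  have := before_find set0 H'; rewrite nth_rev; last lia.
  have -> : size s - (size s - j.+1).+1 = j by lia.
  by rewrite Hv.
Qed.

Lemma first_le_last v : has (fun K : {set T} => v \in K) s -> first_pos v <= last_pos v.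
Proof.
move=> Hh; have Hlo : first_pos v < size s by rewrite /first_pos -has_find.
by have := in_nth_range Hh Hlo; rewrite (nth_find set0 Hh) => /esym /andP [].
Qed.

Lemma ranges_represent g : (forall K, K \in s -> is_clique g K) ->
  (forall u v, u != v -> g u v -> exists2 K, K \in s & (u \in K) && (v \in K)) ->
  (forall v, has (fun K : {set T} => v \in K) s) ->
  forall u v, u != v -> g u v = (first_pos u <= last_pos v) && (first_pos v <= last_pos u).
Proof.
move=> Hcl Hcov Hall u v Huv.
have Ru := in_nth_range (Hall u); have Rv := in_nth_range (Hall v).
have := first_le_last (Hall u); have := first_le_last (Hall v).
have := last_pos_lt (Hall u); have := last_pos_lt (Hall v) => ? ? ? ?.
apply/idP/andP => [/(Hcov _ _ Huv) [K HK /andP []]|[H1 H2]].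
- have Hj : index K s < size s by rewrite index_mem.
  by rewrite -(nth_index set0 HK) (Ru _ Hj) (Rv _ Hj) => /andP [? ?] /andP [? ?]; split; lia.
- pose j := maxn (first_pos u) (first_pos v).
  have Hj : j < size s by rewrite /j; lia.
  apply: (Hcl (nth set0 s j)) => //; first exact: mem_nth.
  + by rewrite (Ru _ Hj); apply/andP; split; rewrite /j; lia.
  + by rewrite (Rv _ Hj); apply/andP; split; rewrite /j; lia.
Qed.
End Ranges.

(* If the intervals of x and y in an interval model only touch (r x = l y),
   doubling all coordinates and shortening these two intervals by a half
   removes exactly the edge xy. *)
Lemma touching_removable g (l r : T -> nat) x y : x != y -> (forall v, l v <= r v) ->
  (forall u v, u != v -> g u v = (l u <= r v) && (l v <= r u)) -> r x = l y ->
  is_interval_graph (remove_edge g x y).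
Proof.
move=> xy Hlr Hg Exy.
exists (fun v => if v == y then (2 * l v).+1 else 2 * l v).
exists (fun v => if v == x then 2 * r v else (2 * r v).+1).
split.
- move=> v; have := Hlr v; case: (v =P y) => [Ev|_]; case: (v =P x) => [Ev'|_] //=; try lia.
  by subst; rewrite eqxx in xy.
- move=> u v Huv; rewrite /remove_edge Hg //.
  have := Hlr u; have := Hlr v.
  case: (u =P x) => [Eu|Nu]; case: (v =P y) => [Ev|Nv]; case: (u =P y) => [Eu'|Nu'];
  case: (v =P x) => [Ev'|Nv'] /=; subst; rewrite ?eqxx in xy Huv *; try done; try lia.
Qed.

Lemma remove_edge_sym g x y :
  is_interval_graph (remove_edge g y x) -> is_interval_graph (remove_edge g x y).
Proof.
case=> l [r [H1 H2]]; exists l, r; split => // u v Huv.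
by rewrite -H2 // /remove_edge orbC.
Qed.

Lemma single_meet_touch lx rx ly ry a jx jy :
  (forall j, (lx <= j <= rx) && (ly <= j <= ry) -> j = a) ->
  lx <= a <= rx -> ly <= a <= ry ->
  lx <= jx <= rx -> ~~ (ly <= jx <= ry) ->
  ly <= jy <= ry -> ~~ (lx <= jy <= rx) -> rx = ly \/ ry = lx.
Proof.
move=> Hmeet ? ? ? ? ? ?.
have E1 : maxn lx ly = a by apply: Hmeet; apply/andP; split; lia.
have E2 : minn rx ry = a by apply: Hmeet; apply/andP; split; lia.
lia.
Qed.

Lemma interval_edge_of_clique_order g s x y :
  symmetric g -> consecutive s -> uniq s ->
  (forall C, C \in s <-> is_max_clique g C) -> x != y ->
  (exists2 K, K \in s & (x \in K) && (y \in K)) ->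
  (forall K1 K2, K1 \in s -> K2 \in s -> x \in K1 -> y \in K1 ->
     x \in K2 -> y \in K2 -> K1 = K2) ->
  (exists2 K, K \in s & (x \in K) && (y \notin K)) ->
  (exists2 K, K \in s & (y \in K) && (x \notin K)) ->
  interval_edge g x y.
Proof.
move=> g_sym Hcons Huniq Hmax xy [K0 HK0 /andP [HxK0 HyK0]] Hone [Kx HKx Hx] [Ky HKy Hy].
have Hcl K : K \in s -> is_clique g K by move/Hmax => [].
have [Hall Hedge] := max_cliques_cover g_sym Hmax.
split; first exact: Hcl HK0 _ _ HxK0 HyK0 xy.
have Rx := in_nth_range Hcons (Hall x); have Ry := in_nth_range Hcons (Hall y).
have Hmeet j : (first_pos s x <= j <= last_pos s x) && (first_pos s y <= j <= last_pos s y) ->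
    j = index K0 s.
  move=> /andP [H1 H2]; have Hj : j < size s by have := last_pos_lt (Hall x); lia.
  rewrite -(Rx _ Hj) in H1; rewrite -(Ry _ Hj) in H2.
  by rewrite -(Hone _ _ (mem_nth set0 Hj) HK0 H1 H2 HxK0 HyK0) index_uniq.
have at_pos v K : K \in s -> (v \in K) = (first_pos s v <= index K s <= last_pos s v).
  by move=> HK; rewrite -(in_nth_range Hcons (Hall v) _) ?nth_index ?index_mem.
move: Hx Hy; rewrite (at_pos x _ HKx) (at_pos y _ HKx) (at_pos x _ HKy) (at_pos y _ HKy).
move=> /andP [Hx1 Hx2] /andP [Hy1 Hy2].
move: HxK0 HyK0; rewrite (at_pos x _ HK0) (at_pos y _ HK0) => Ha1 Ha2.
have Hrep := ranges_represent Hcons Hcl Hedge Hall.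
have Hlr v : first_pos s v <= last_pos s v by apply: first_le_last.
have [E|E] := single_meet_touch Hmeet Ha1 Ha2 Hx1 Hx2 Hy1 Hy2.
- exact: touching_removable xy Hlr Hrep E.
- by apply: remove_edge_sym; apply: touching_removable _ Hlr Hrep E; rewrite eq_sym.
Qed.
End CliqueOrders.


Section CommonSection.
Variables (T : finType) (g : rel T) (t : mtree T) (x y : T).
Variables (secs : seq ({set T} * option (mtree T))) (i : nat).
Hypothesis t_mpq : is_MPQ_tree g t.
Hypothesis hQ : is_node t (QNode secs).
Hypothesis hcommon : forall j, j < size secs ->
  (x \in sec secs j) && (y \in sec secs j) = (j == i).
Hypothesis hclique : is_clique g (subV secs i).

(* A vertex of Q spans at least two sections, so it owns a section which it
   does not share with a vertex meeting it only in S_i. *)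
Lemma private_section z w : occurs z (QNode secs) ->
  (forall j, j < size secs -> (z \in sec secs j) && (w \in sec secs j) = (j == i)) ->
  exists2 j, j < size secs & (z \in sec secs j) && (w \notin sec secs j).
Proof.
move=> Hz Hzw; have [l [r [/andP [Hlr Hrs] Hin]]] := t_mpq.2.1 z secs hQ Hz.
have only_i j : j < size secs -> z \in sec secs j -> j != i -> w \notin sec secs j.
  by move=> Hj Hzj; apply: contra => Hwj; rewrite -Hzw // Hzj Hwj.
have Hls : l < size secs by apply: ltn_trans Hrs.
have Hzl : z \in sec secs l by rewrite Hin // leqnn ltnW.
have Hzr : z \in sec secs r by rewrite Hin // leqnn ltnW.
case: (eqVneq l i) => [Eli|Nli].
- by exists r; rewrite // Hzr only_i // -Eli neq_ltn Hlr orbT.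
- by exists l; rewrite // Hzl only_i.
Qed.

Section Decomposed.
Variable A : {set T}.
Hypothesis hA : cliques_through secs [set x; y] t A.

Lemma clique_at_section j : j < size secs -> exists2 K, K \in cliques t &
  forall v, v \in [set x; y] -> (v \in K) = (v \in sec secs j).
Proof.
move=> Hj; have [_ [_ /(_ j Hj) [C HC /andP [_ HK]]]] := hA.
exists (A :|: sec secs j :|: C) => // v Hv.
by rewrite !in_setU (negbTE (hA.1 v Hv)) (negbTE (HC v Hv)) orbF.
Qed.

Lemma private_clique z w : z \in [set x; y] -> w \in [set x; y] ->
  occurs z (QNode secs) ->
  (forall j, j < size secs -> (z \in sec secs j) && (w \in sec secs j) = (j == i)) ->
  exists2 K, K \in cliques t & (z \in K) && (w \notin K).
Proof.
move=> HzW HwW Hz Hzw; have [j Hj /andP [Hzj Hwj]] := private_section Hz Hzw.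
have [K HK HKW] := clique_at_section Hj.
by exists K; rewrite // !HKW ?Hzj.
Qed.

Lemma clique_xy_shape K : K \in cliques t -> x \in K -> y \in K ->
  exists2 C : {set T}, C \subset subV secs i & K = A :|: sec secs i :|: C.
Proof.
move=> HK HxK HyK.
have [j [C [Hj HCW HCj EK]]] := hA.2.1 K HK (ex_intro2 _ _ x (set21 x y) HxK).
have in_sec v : v \in [set x; y] -> v \in K -> v \in sec secs j.
  by move=> Hv; rewrite EK !in_setU (negbTE (hA.1 v Hv)) (negbTE (HCW v Hv)) orbF.
have Eji : j = i by apply/eqP; rewrite -hcommon // !in_sec ?set21 ?set22.
by exists C; rewrite -?Eji.
Qed.

(* Since V_i is a clique, at most one maximal clique contains x and y. *)
Lemma clique_xy_unique K1 K2 : K1 \in cliques t -> K2 \in cliques t ->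
  x \in K1 -> y \in K1 -> x \in K2 -> y \in K2 -> K1 = K2.
Proof.
move=> H1 H2 Hx1 Hy1 Hx2 Hy2.
have [_ [_ [_ [max_cl _]]]] := t_mpq.
have [C1 HC1 E1] := clique_xy_shape H1 Hx1 Hy1.
have [C2 HC2 E2] := clique_xy_shape H2 Hx2 Hy2.
have diff_sub (B Ca Cb : {set T}) : Ca \subset subV secs i ->
    (B :|: Ca) :\: (B :|: Cb) \subset subV secs i.
  move=> HCa; apply: subset_trans HCa; apply/subsetP => u.
  by rewrite in_setD !in_setU; case: (u \in B) => //= /andP [].
have [cl1 M1] := (max_cl K1).1 H1; have [cl2 M2] := (max_cl K2).1 H2.
have HU : is_clique g (K1 :|: K2).
  by apply: clique_union cl1 cl2 hclique _ _; rewrite E1 E2 diff_sub.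
by rewrite -(M1 _ HU (subsetUl _ _)) (M2 _ HU (subsetUr _ _)).
Qed.
End Decomposed.
End CommonSection.


Theorem mainTheorem5 (T : finType) (g : rel T)
  (g_sym : symmetric g) (g_irr : irreflexive g)
  (g_int : is_interval_graph g)
  (t : mtree T) (t_mpq : is_MPQ_tree g t)
  (x y : T) (xy : x != y)
  (secs : seq ({set T} * option (mtree T)))
  (hQ : is_node t (QNode secs))
  (hx : occurs x (QNode secs)) (hy : occurs y (QNode secs))
  (i : nat) (hi : i < size secs)
  (hcommon : forall j, j < size secs ->
     (x \in sec secs j) && (y \in sec secs j) = (j == i))
  (hclique : is_clique g (subV secs i)) :
  interval_edge g x y.
Proof.
have hW v : v \in [set x; y] -> occurs v (QNode secs).
  by rewrite !inE => /orP [] /eqP ->.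
have [A hA] := MPQ_cliques_through hW t_mpq hQ.
have hcommon' j : j < size secs -> (y \in sec secs j) && (x \in sec secs j) = (j == i).
  by move=> Hj; rewrite andbC hcommon.
have [_ [_ [uniq_cl [max_cl _]]]] := t_mpq.
apply: (interval_edge_of_clique_order g_sym (cliques_consecutive t_mpq) uniq_cl max_cl xy).
- have [K HK HKW] := clique_at_section hA hi.
  have /andP [Hxi Hyi] : (x \in sec secs i) && (y \in sec secs i) by rewrite hcommon.
  by exists K; rewrite // !HKW ?Hxi ?Hyi ?set21 ?set22.
- exact: (clique_xy_unique t_mpq hcommon hclique hA).
- exact: (private_clique t_mpq hQ hA (set21 x y) (set22 x y) hx hcommon).
- exact: (private_clique t_mpq hQ hA (set22 x y) (set21 x y) hy hcommon').
Qed.
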